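(* Let $\Omega\subseteq\mathbb{R}^n$ be open and convex, let $f:\Omega\to\mathbb{R}$ be convex and differentiable with $\nabla f$ Lipschitz continuous with constant $L$ (extend $f$ by $+\infty$ outside $\Omega$), let $g:\mathbb{R}^n\to\mathbb{R}\cup\{+\infty\}$ be convex with closed sublevel sets, and let $h=f+g$ have compact sublevel sets and $h^\star=\inf_x h(x)<\infty$. Run the oracle-structured minimization method (described in the context) from $x^0\in\Omega$, with parameters satisfying $\mu_{\max}\tau_{\min}>2L/(1-\alpha)$. Then for every $k_0$ there exists $k\ge k_0$ with $t_k=1$; that is, undamped steps occur infinitely often.
   Context: Oracle-structured minimization method (OSMM). Fixed parameters: memory $M\ge1$ (integer), $\alpha,\beta\in(0,1)$, $\tau_{\min}>0$, $0<\mu_{\min}\le\mu_{\max}$, $\gamma_{\rm dec}\in(0,1)$, $\gamma_{\rm inc}>1$, and an initial $\mu_0\in[\mu_{\min},\mu_{\max}]$. There is a constant $C$ and, for each $k$, a symmetric positive semidefinite matrix $H_k$ with $\|H_k\|_2\le C$ (otherwise arbitrary). For $k=0,1,2,\dots$: (1) $l_k(x)=\max_{i=\max\{0,k-M+1\},\dots,k}\big(f(x^i)+\nabla f(x^i)^T(x-x^i)\big)$; $\tau_k=\operatorname{Tr}(H_k)/n$; $\lambda_k=\mu_k(\tau_k+\tau_{\min})$. (2) $x^{k+1/2}=\operatorname*{argmin}_x\big(l_k(x)+g(x)+\tfrac12(x-x^k)^T(H_k+\lambda_kI)(x-x^k)\big)$, $v^k=x^{k+1/2}-x^k$. (3) With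 $\phi_k(t)=f(x^k+tv^k)+t\,g(x^{k+1/2})+(1-t)g(x^k)$ for $t\in[0,1]$, let $t_k=\beta^j$ where $j$ is the smallest nonnegative integer with $\phi_k(t_k)\le h(x^k)-\frac{\alpha t_k}{2}(v^k)^T(H_k+\lambda_kI)v^k$; set $x^{k+1}=x^k+t_kv^k$. (4) $\mu_{k+1}=\max\{\gamma_{\rm dec}\mu_k,\mu_{\min}\}$ if $t_k=1$, and $\mu_{k+1}=\min\{\gamma_{\rm inc}\mu_k,\mu_{\max}\}$ if $t_k<1$. *)

From HB Require Import structures.
From mathcomp Require Import all_boot all_order all_algebra.
From mathcomp Require Import all_classical all_reals all_analysis.
Set Implicit Arguments. Unset Strict Implicit. Unset Printing Implicit Defensive.
Import Order.TTheory GRing.Theory Num.Theory.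
Import numFieldNormedType.Exports.
Local Open Scope classical_set_scope.
Local Open Scope ring_scope.

Section OSMM.
Variables (R : realType) (n : nat).
Notation vec := 'cV[R]_n.

Definition dotv (u v : vec) : R := \sum_(i < n) u i 0 * v i 0.
Definition enorm (v : vec) : R := Num.sqrt (dotv v v).

Definition gradient (f : vec -> R) (x : vec) : vec :=
  \col_(i < n) ('d f x (delta_mx i 0 : vec)).

Definition convex_fun_on (A : set vec) (f : vec -> R) : Prop :=
  forall x y (t : R), A x -> A y -> 0 <= t <= 1 ->
    f (t *: x + (1 - t) *: y) <= t * f x + (1 - t) * f y.

Definition convex_efun (g : vec -> \bar R) : Prop :=
  forall (x y : vec) (t : R), 0 < t < 1 ->
    (g (t *: x + (1 - t) *: y)%R <= t%:E * g x + (1 - t)%:E * g y)%E.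

Definition fext (Omega : set vec) (f : vec -> R) (x : vec) : \bar R :=
  if `[< Omega x >] then (f x)%:E else +oo%E.

Definition hfun (Omega : set vec) (f : vec -> R) (g : vec -> \bar R) (x : vec)
  : \bar R := (fext Omega f x + g x)%E.

(* Cutting-plane model l_k(y) = max_{i = max(0,k-M+1)..k} f(x^i) + grad f(x^i)^T (y - x^i). *)
Definition lin_at (f : vec -> R) (X : nat -> vec) (i : nat) (y : vec) : R :=
  f (X i) + dotv (gradient f (X i)) (y - X i).
Definition lmodel (M : nat) (f : vec -> R) (X : nat -> vec) (k : nat) (y : vec) : R :=
  \big[Num.max/lin_at f X k y]_(k.+1 - M <= i < k.+1) lin_at f X i y.

Definition quadf (A : 'M[R]_n) (v : vec) : R := dotv v (A *m v).

End OSMM.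

(* Suppose t_k < 1 for every k >= k0.  Then each line search fails at s = 1,
   which forces x^k into Omega with g(x^k) finite, and mu_k grows
   geometrically until it stays at mu_max, so that eventually
   lambda_k >= mu_max tau_min > 2L / (1 - alpha).  At such a k the trial point
   z = x^{k+1/2} has g(z) finite (it minimizes the model), hence lies in Omega:
   h stays bounded on the part of [x^k, z] inside Omega, and a closed sublevel
   set of h inside the open set Omega cannot be left along a segment.  The
   cutting-plane model lies below f and above the linearization at x^k, the
   Lipschitz gradient bounds f(z) by that linearization plus L |z - x^k|^2, and
   comparing the model at z with its value at x^k yields the Armijo inequality
   at s = 1, a contradiction.  If g takes the value -oo, it is -oo everywhere
   and the unit step is always accepted. *)

From HB Require Import structures.
From mathcomp Require Import all_boot all_order all_algebra.
From mathcomp Require Import all_classical all_reals all_analysis.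
From mathcomp Require Import lra zify.
Set Implicit Arguments. Unset Strict Implicit. Unset Printing Implicit Defensive.
Import Order.TTheory GRing.Theory Num.Theory.
Import numFieldNormedType.Exports.
Local Open Scope classical_set_scope.
Local Open Scope ring_scope.

Lemma segment_in_open (R : realType) (V : normedModType R) (U A : set V)
    (x z : V) :
  open U -> closed A -> A `<=` U -> U x ->
  (forall s : R, 0 <= s <= 1 -> U (x + s *: (z - x)) -> A (x + s *: (z - x))) ->
  U z.
Proof.
move=> oU cA AU Ux UA; pose w (s : R) := x + s *: (z - x).
have cw : continuous w.
  by move=> s; apply: cvgD; [exact: cvg_cst | exact: cvgZr_tmp].
pose I := [set` `[0 : R, 1]].
have cI : connected I by apply/connected_intervalP; exact: interval_is_interval.
have IU : I `&` w @^-1` U = I.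
  apply: cI.
  - by exists 0; rewrite /I /w /= in_itv /= lexx ler01 scale0r addr0.
  - by exists (w @^-1` U) => //; exact: open_comp.
  exists (w @^-1` A); first exact: preimage_closed.
  apply/seteqP; split=> s [s01 ws]; split=> //; last exact: AU.
  by apply: UA; move: s01; rewrite /I /= in_itv.
have : I 1 by rewrite /I /= in_itv /= lexx ler01.
by rewrite -IU => -[_]; rewrite /w /= scale1r addrC subrK.
Qed.

Section inner_product.
Variables (R : realType) (n : nat).
Implicit Types u v w : 'cV[R]_n.

Lemma dotvC u v : dotv u v = dotv v u.
Proof. by apply: eq_bigr => i _; rewrite mulrC. Qed.

Lemma dotvDl u v w : dotv (u + v) w = dotv u w + dotv v w.
Proof. by rewrite /dotv -big_split; apply: eq_bigr => i _; rewrite mxE mulrDl. Qed.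

Lemma dotvZl (s : R) u v : dotv (s *: u) v = s * dotv u v.
Proof. by rewrite /dotv mulr_sumr; apply: eq_bigr => i _; rewrite mxE mulrA. Qed.

Lemma dotvNl u v : dotv (- u) v = - dotv u v.
Proof. by rewrite -scaleN1r dotvZl mulN1r. Qed.

Lemma dotvBl u v w : dotv (u - v) w = dotv u w - dotv v w.
Proof. by rewrite dotvDl dotvNl. Qed.

Lemma dotvDr u v w : dotv w (u + v) = dotv w u + dotv w v.
Proof. by rewrite dotvC dotvDl !(dotvC w). Qed.

Lemma dotvZr (s : R) u v : dotv v (s *: u) = s * dotv v u.
Proof. by rewrite dotvC dotvZl dotvC. Qed.

Lemma dotvNr u v : dotv v (- u) = - dotv v u.
Proof. by rewrite dotvC dotvNl dotvC. Qed.

Lemma dotvBr u v w : dotv w (u - v) = dotv w u - dotv w v.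
Proof. by rewrite dotvDr dotvNr. Qed.

Lemma dotv0r v : dotv v 0 = 0.
Proof. by rewrite /dotv big1 // => i _; rewrite mxE mulr0. Qed.

Lemma dotvv_ge0 v : 0 <= dotv v v.
Proof. by apply: sumr_ge0 => i _; rewrite -expr2 sqr_ge0. Qed.

Lemma dotvv_eq0 v : dotv v v = 0 -> v = 0.
Proof.
move=> /eqP; rewrite psumr_eq0 => [/allP v0|i _]; last by rewrite -expr2 sqr_ge0.
apply/matrixP => i j; rewrite ord1 mxE.
by have /(_ (mem_index_enum i)) := v0 i; rewrite -expr2 sqrf_eq0 => /eqP.
Qed.

Lemma enorm_ge0 v : 0 <= enorm v.
Proof. exact: sqrtr_ge0. Qed.

Lemma enorm_sqr v : enorm v ^+ 2 = dotv v v.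
Proof. by rewrite sqr_sqrtr // dotvv_ge0. Qed.

Lemma enorm_eq0 v : (enorm v == 0) = (v == 0).
Proof.
apply/idP/eqP => [|->]; last by rewrite /enorm dotv0r sqrtr0.
by rewrite -sqrf_eq0 enorm_sqr => /eqP /dotvv_eq0.
Qed.

Lemma enorm_gt0 v : (0 < enorm v) = (v != 0).
Proof. by rewrite lt_def enorm_ge0 andbT enorm_eq0. Qed.

Lemma cauchy_schwarz u v : dotv u v <= enorm u * enorm v.
Proof.
have [->|u0] := eqVneq u 0; first by rewrite dotvC dotv0r mulr_ge0 ?enorm_ge0.
have [->|v0] := eqVneq v 0; first by rewrite dotv0r mulr_ge0 ?enorm_ge0.
have a0 : 0 < enorm u by rewrite enorm_gt0.
have b0 : 0 < enorm v by rewrite enorm_gt0.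
have uu := enorm_sqr u; have vv := enorm_sqr v.
set a := enorm u in a0 uu *; set b := enorm v in b0 vv *.
(* expand 0 <= |b u - a v|^2 = 2 a b (a b - <u, v>) *)
have := dotvv_ge0 (b *: u - a *: v).
rewrite !(dotvBl, dotvBr, dotvZl, dotvZr) (dotvC v u) -uu -vv => H.
have : 0 <= (a * b) * (a * b - dotv u v) by nra.
by rewrite pmulr_rge0 ?mulr_gt0 // subr_ge0.
Qed.

Lemma quadf0 (A : 'M[R]_n) : quadf A 0 = 0.
Proof. by rewrite /quadf mulmx0 dotv0r. Qed.

Lemma quadfD_scalar (A : 'M[R]_n) (l : R) v :
  quadf (A + l%:M) v = quadf A v + l * dotv v v.
Proof. by rewrite /quadf mulmxDl mul_scalar_mx dotvDr dotvZr. Qed.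

Lemma dotv_delta (i : 'I_n) v : dotv (delta_mx i 0) v = v i 0.
Proof.
rewrite /dotv (bigD1 i) //= big1 ?addr0 => [|j /negbTE ji]; rewrite mxE.
  by rewrite !eqxx mul1r.
by rewrite ji mul0r.
Qed.

Lemma mxtrace_psd_ge0 (A : 'M[R]_n) : (forall v, 0 <= quadf A v) -> 0 <= \tr A.
Proof.
move=> A_psd; apply: sumr_ge0 => i _.
by have := A_psd (delta_mx i 0); rewrite /quadf dotv_delta -colE mxE.
Qed.

End inner_product.

Section gradient.
Variables (R : realType) (n : nat).
Implicit Types (f : 'cV[R]_n -> R) (x y : 'cV[R]_n).

Lemma dotv_gradient f x (d : 'cV[R]_n) :
  differentiable f x -> dotv (gradient f x) d = 'd f x d.
Proof.
move=> df; rewrite {2}(matrix_sum_delta d) linear_sum /dotv.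
by apply: eq_bigr => i _; rewrite big_ord1 linearZ /= mxE mulrC.
Qed.

Variables (Omega : set 'cV[R]_n) (f : 'cV[R]_n -> R).
Hypotheses (f_convex : convex_fun_on Omega f)
  (f_diff : forall x, Omega x -> differentiable f x).

(* The directional derivative in direction y - x is the limit of the difference
   quotients (f (x + h (y - x)) - f x) / h, each bounded by f y - f x for
   0 < h <= 1. *)
Lemma convex_gradient_ineq x y :
  Omega x -> Omega y -> f x + dotv (gradient f x) (y - x) <= f y.
Proof.
move=> Ox Oy; have dfx := f_diff Ox.
rewrite dotv_gradient // -deriveE // -lerBrDl.
have := @diff_derivable _ _ _ f x (y - x) dfx; rewrite /derivable /derive.
set q := (fun h : R => _) => dq.
have dq_right : q @ 0^'+ --> lim (q @ 0^').
  by apply: cvg_trans dq; apply: cvg_fmap2; apply: within_subset => h /= /gt_eqF ->.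
apply: (cvgr_to_le dq_right); near=> h.
have h0 : 0 < h by near: h; exact: nbhs_right_gt.
have h1 : h <= 1 by near: h; exact: nbhs_right_le.
rewrite /q /= ler_pdivrMl //.
have h01 : 0 <= h <= 1 by rewrite (ltW h0) h1.
have := f_convex Oy Ox h01.
have -> : h *: y + (1 - h) *: x = h *: (y - x) + x.
  by rewrite scalerBr scalerBl scale1r addrCA addrC.
by move=> le; rewrite mulrBr; lra.
Unshelve. all: by end_near.
Qed.

Variable L : R.
Hypothesis grad_lipschitz : forall x y, Omega x -> Omega y ->
  enorm (gradient f x - gradient f y) <= L * enorm (x - y).

Lemma lipschitz_gradient_upper x y : Omega x -> Omega y ->
  f y <= f x + dotv (gradient f x) (y - x) + L * dotv (y - x) (y - x).
Proof.
move=> Ox Oy; move: (convex_gradient_ineq Oy Ox) (grad_lipschitz Oy Ox).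
(* abstracting the gradients keeps rewriting and lra from unfolding them *)
move: (gradient f x) (gradient f y) => gx gy fx_ge lip.
have := cauchy_schwarz (gy - gx) (y - x).
have := ler_wpM2r (enorm_ge0 (y - x)) lip.
rewrite -(enorm_sqr (y - x)).
rewrite -[x - y]opprB dotvNr -[dotv gy _](subrK (dotv gx (y - x))) -dotvBl in fx_ge.
lra.
Qed.

End gradient.

Section cutting_plane_model.
Variables (R : realType) (n : nat) (f : 'cV[R]_n -> R) (X : nat -> 'cV[R]_n).
Variables (M k : nat).

Lemma lin_at_le_lmodel y : (1 <= M)%N -> lin_at f X k y <= lmodel M f X k y.
Proof.
move=> M1; apply: (@le_bigmax_seq _ _ _ _ _ k xpredT (fun i => lin_at f X i y)) => //.
by rewrite mem_index_iota ltnSn andbT leq_subLR addnC -addn1 leq_add2l.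
Qed.

Lemma lmodel_le (Omega : set 'cV[R]_n) y :
  convex_fun_on Omega f -> (forall x, Omega x -> differentiable f x) ->
  Omega y -> Omega (X k) ->
  (forall i, (k.+1 - M <= i < k.+1)%N -> Omega (X i)) ->
  lmodel M f X k y <= f y.
Proof.
move=> f_convex f_diff Oy OXk window; rewrite /lmodel big_seq.
have lin_le i : Omega (X i) -> lin_at f X i y <= f y.
  by move=> OXi; apply: (convex_gradient_ineq f_convex f_diff OXi Oy).
elim/big_ind: _ => [|u w hu hw|i]; first exact: lin_le.
  by rewrite ge_max hu hw.
by rewrite mem_index_iota => /window; exact: lin_le.
Qed.

End cutting_plane_model.

Section convex_efun.
Variables (R : realType) (n : nat) (g : 'cV[R]_n -> \bar R).
Hypothesis g_convex : convex_efun g.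

(* z is the midpoint of y and 2 z - y *)
Lemma convex_efunNy y : g y = -oo%E -> forall z, g z = -oo%E.
Proof.
move=> gy z; apply/eqP; rewrite -leeNy_eq.
have half : (0 : R) < (2^-1 : R) < 1.
  by apply/andP; split; [rewrite invr_gt0 | rewrite invf_lt1]; rewrite ?ltr0n ?ltr1n.
have := g_convex y (2%:R *: z - y) half.
have -> : 2^-1 *: y + (1 - 2^-1) *: (2%:R *: z - y) = z.
  have -> : (1 - 2^-1 : R) = 2^-1 by lra.
  by rewrite scalerBr scalerA mulVf ?pnatr_eq0 // scale1r addrC subrK.
by rewrite gy gt0_muleNy ?lte_fin ?invr_gt0 ?ltr0n // addNye.
Qed.

Lemma convex_efun_segment_le x z gx gz (s : R) :
  g x = gx%:E -> g z = gz%:E -> 0 <= s <= 1 ->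
  (g (x + s *: (z - x)) <= (Num.max gx gz)%:E)%E.
Proof.
move=> gxE gzE /andP[s0 s1].
have [->|s0'] := eqVneq s 0; first by rewrite scale0r addr0 gxE lee_fin le_max lexx.
have [->|s1'] := eqVneq s 1.
  by rewrite scale1r addrC subrK gzE lee_fin le_max lexx orbT.
have s01 : 0 < s < 1 by rewrite !lt_def s0 s1 s0' eq_sym s1'.
have -> : x + s *: (z - x) = s *: z + (1 - s) *: x.
  by rewrite scalerBr scalerBl scale1r addrCA addrC.
apply: le_trans (g_convex z x s01) _.
rewrite gzE gxE -!EFinM -EFinD lee_fin.
have : gx <= Num.max gx gz by rewrite le_max lexx.
have : gz <= Num.max gx gz by rewrite le_max lexx orbT.
nra.
Qed.

End convex_efun.

Section osmm_step.
Variables (R : realType) (n : nat) (Omega : set 'cV[R]_n).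
Variables (f : 'cV[R]_n -> R) (g : 'cV[R]_n -> \bar R).

Definition osmm_model (M : nat) (X : nat -> 'cV[R]_n) (k : nat) (P : 'M[R]_n)
  (y : 'cV[R]_n) : \bar R :=
  ((lmodel M f X k y + quadf P (y - X k) / 2)%:E + g y)%E.

Definition armijo (alpha : R) (P : 'M[R]_n) (x xh : 'cV[R]_n) (s : R) : Prop :=
  (fext Omega f (x + s *: (xh - x)) + s%:E * g xh + (1 - s)%:E * g x
     <= hfun Omega f g x - (alpha * s / 2 * quadf P (xh - x))%:E)%E.

Hypothesis g_convex : convex_efun g.

Lemma armijo1_Ny y : g y = -oo%E -> forall alpha P x xh, armijo alpha P x xh 1.
Proof.
move=> gy alpha P x xh; rewrite /armijo !(convex_efunNy g_convex gy).
by rewrite mul1e subrr mul0e adde0 addeNy leNye.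
Qed.

Hypothesis g_gtNy : forall y, g y != -oo%E.

Lemma hfun_sublevel_sub_Omega (c : R) :
  [set y | (hfun Omega f g y <= c%:E)%E] `<=` Omega.
Proof.
move=> y /=; rewrite /hfun /fext; case: asboolP => // _.
by rewrite addye ?g_gtNy.
Qed.

Lemma not_armijo1_dom alpha P x xh :
  ~ armijo alpha P x xh 1 -> Omega x /\ exists gx, g x = gx%:E.
Proof.
move=> NA; have hx : hfun Omega f g x != +oo%E.
  by apply: contra_notN NA => /eqP hx; rewrite /armijo hx -EFinN addye // leey.
move: hx; rewrite /hfun /fext; case: asboolP => [Ox|_]; last by rewrite addye ?g_gtNy.
by move: (g_gtNy x); case: (g x) => [r _ _| //| //]; split=> //; exists r.
Qed.

Variable L : R.
Hypotheses (Omega_open : open Omega) (f_convex : convex_fun_on Omega f)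
  (f_diff : forall x, Omega x -> differentiable f x)
  (grad_lipschitz : forall x y, Omega x -> Omega y ->
     enorm (gradient f x - gradient f y) <= L * enorm (x - y))
  (h_compact : forall c : R, compact [set y | (hfun Omega f g y <= c%:E)%E]).

(* On the part of [x, z] inside Omega, f is bounded through the Lipschitz
   gradient and g by max (g x) (g z), so that part stays in the closed sublevel
   set {h <= B}. *)
Lemma Omega_of_finite_g x z gx gz :
  Omega x -> g x = gx%:E -> g z = gz%:E -> Omega z.
Proof.
move=> Ox gxE gzE; set v := z - x; set a := dotv (gradient f x) v.
pose B := f x + `|a| + `|L| * dotv v v + Num.max gx gz.
have B_closed : closed [set y | (hfun Omega f g y <= B%:E)%E].
  exact: compact_closed (@norm_hausdorff _ _) (@h_compact B).
apply: (segment_in_open Omega_open B_closed (@hfun_sublevel_sub_Omega B) Ox).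
move=> s s01 Ows; rewrite /= /hfun /fext asboolT // /B EFinD.
apply: leeD; last exact: convex_efun_segment_le.
have := lipschitz_gradient_upper f_convex f_diff grad_lipschitz Ox Ows.
have -> : x + s *: v - x = s *: v by rewrite addrC addKr.
rewrite dotvZr dotvZl dotvZr -/a lee_fin => /le_trans; apply.
have := dotvv_ge0 v; move: (dotv v v) => d d0; clearbody a.
case/andP: s01 => s0 s1.
have sa : s * a <= `|a| by have := ler_norm a; have := normr_ge0 a; nra.
have ssd0 : 0 <= s * (s * d) by rewrite !mulr_ge0.
have ssd : s * (s * d) <= d by rewrite mulrA ler_piMl // mulr_ile1.
have := ler_norm L; have := normr_ge0 L; nra.
Qed.

Lemma armijo1_of_model_min M (X : nat -> 'cV[R]_n) k xh (A : 'M[R]_n) lam alpha gx :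
  (1 <= M)%N -> (forall i, (k.+1 - M <= i < k.+1)%N -> Omega (X i)) ->
  g (X k) = gx%:E ->
  (forall y, (osmm_model M X k (A + lam%:M) xh <= osmm_model M X k (A + lam%:M) y)%E) ->
  (forall v, 0 <= quadf A v) -> alpha <= 1 -> 2 * L <= (1 - alpha) * lam ->
  armijo alpha (A + lam%:M) (X k) xh 1.
Proof.
move=> M1 window gxE xh_min A_psd alpha1 lam_large.
have Ox : Omega (X k).
  by apply: window; rewrite ltnSn andbT leq_subLR addnC -addn1 leq_add2l.
have := xh_min (X k); rewrite /osmm_model subrr quadf0 mul0r addr0 gxE.
case gzE : (g xh) => [gz| |]; last 2 first.
- by rewrite addey.
- by have := g_gtNy xh; rewrite gzE.
rewrite -!EFinD lee_fin => model_le.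
have Oz := Omega_of_finite_g Ox gxE gzE.
rewrite /armijo (_ : X k + 1 *: (xh - X k) = xh); last by rewrite scale1r addrC subrK.
rewrite /hfun /fext !asboolT // gzE gxE.
rewrite mul1e subrr mul0e adde0 -EFinN -!EFinD lee_fin.
have lm_x := lmodel_le f_convex f_diff Ox Ox window.
have lm_z := lin_at_le_lmodel f X k xh M1.
have up := lipschitz_gradient_upper f_convex f_diff grad_lipschitz Ox Oz.
have q_ge : lam * dotv (xh - X k) (xh - X k) <= quadf (A + lam%:M) (xh - X k).
  by rewrite quadfD_scalar lerDr.
have lam_d := ler_wpM2r (dotvv_ge0 (xh - X k)) lam_large.
rewrite /lin_at in lm_z; move: lm_z up; move: (gradient f (X k)) => gxk lm_z up.
move: (quadf _ _) q_ge model_le => q q_ge model_le.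
move: (dotv (xh - X k) (xh - X k)) lam_d q_ge up => d lam_d q_ge up.
have alpha1' : 0 <= 1 - alpha by rewrite subr_ge0.
have := ler_wpM2l alpha1' q_ge.
lra.
Qed.

End osmm_step.

Lemma capped_geometric_ge_cap (R : realType) (u : nat -> R) (c b : R) :
  1 < c -> 0 <= b -> 0 < u 0 ->
  (forall m, u m.+1 = Num.min (c * u m) b) ->
  exists N, forall m, (N <= m)%N -> b <= u m.
Proof.
move=> c1 b0 u0 uS.
have c0 : 0 < c by exact: lt_trans c1.
have u_ge m : Num.min (c ^+ m * u 0) b <= u m.
  elim: m => [|m IH]; first by rewrite expr0 mul1r ge_min lexx.
  rewrite uS exprSr mulrAC le_min [_ <= b]ge_min lexx orbT andbT ge_min.
  have [ab|ba] := leP (c ^+ m * u 0) b.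
    by rewrite mulrC ler_pM2l // -(min_l ab) IH.
  rewrite (min_r (ltW ba)) in IH.
  have um0 := le_trans b0 IH.
  by apply/orP; right; apply: le_trans IH _; rewrite ler_peMl // ltW.
have e0 : 0 < u 0 / (b + 1) by rewrite divr_gt0 // ltr_wpDl.
have cV1 : `|c^-1| < 1 by rewrite ger0_norm ?invr_ge0 ?ltW // invf_lt1.
have [N _ HN] := cvgr0_norm_lt _ (cvg_expr cV1) _ e0.
have cV0 : 0 <= c^-1 by rewrite invr_ge0 ltW.
exists N => m /HN /=; rewrite ger0_norm ?exprn_ge0 // exprVn => cm.
apply: le_trans (u_ge m); rewrite le_min lexx andbT.
have cm0 : 0 < c ^+ m by exact: exprn_gt0.
move: cm; rewrite ltr_pdivlMr ?ltr_wpDl // mulrC ltr_pdivrMr // mulrC => cm.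
by apply: ltW (lt_trans _ cm); rewrite ltrDl ltr01.
Qed.

Lemma backtracking_unit_step (R : realType) (P : R -> Prop) (beta t : R) :
  (exists j : nat, t = beta ^+ j /\ P (beta ^+ j) /\
     forall j' : nat, (j' < j)%N -> ~ P (beta ^+ j')) ->
  P 1 -> t = 1.
Proof.
move=> [[|j] [-> [_ first_j]]] P1; first by rewrite expr0.
by exfalso; apply: (first_j 0%N); rewrite ?expr0.
Qed.

Section damping_update.
Variables (R : realType) (mu t : nat -> R) (mu_min mu_max gamma_dec gamma_inc : R).
Hypotheses (mu_min_gt0 : 0 < mu_min) (mu_min_le_max : mu_min <= mu_max)
  (gamma_inc_gt1 : 1 < gamma_inc) (mu0_ge : mu_min <= mu 0%N)
  (mu_step : forall k, mu k.+1 =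
     if t k == 1 then Num.max (gamma_dec * mu k) mu_min
     else Num.min (gamma_inc * mu k) mu_max).

Lemma damping_ge_min k : mu_min <= mu k.
Proof.
elim: k => [//|k IH]; rewrite mu_step.
case: eqP => _; first by rewrite le_max lexx orbT.
have mu_k0 : 0 <= mu k := le_trans (ltW mu_min_gt0) IH.
by rewrite le_min mu_min_le_max andbT (le_trans IH) // ler_peMl // ltW.
Qed.

Lemma damping_eventually_max k0 : (forall k, (k0 <= k)%N -> t k != 1) ->
  exists N, forall m, (N <= m)%N -> mu_max <= mu (k0 + m)%N.
Proof.
move=> t_ne1; apply: (capped_geometric_ge_cap gamma_inc_gt1).
- exact: le_trans (ltW mu_min_gt0) mu_min_le_max.
- by rewrite /= addn0; exact: lt_le_trans mu_min_gt0 (damping_ge_min k0).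
by move=> m; rewrite addnS mu_step ifN // t_ne1 // leq_addr.
Qed.

End damping_update.

Lemma two_lipschitz_le_damping (R : realType) (n : nat) (A : 'M[R]_n)
    (L alpha tau_min mu_max m : R) :
  (forall v, 0 <= quadf A v) -> 0 < tau_min -> 0 <= mu_max -> mu_max <= m ->
  alpha < 1 -> mu_max * tau_min > 2 * L / (1 - alpha) ->
  2 * L <= (1 - alpha) * (m * (\tr A / n%:R + tau_min)).
Proof.
move=> A_psd tau_min0 mu_max0 mu_max_le alpha1 mu_max_large.
have tr_ge0 : 0 <= \tr A / n%:R by rewrite divr_ge0 // mxtrace_psd_ge0.
have : mu_max * tau_min <= m * (\tr A / n%:R + tau_min).
  by apply: ler_pM; rewrite ?lerDr ?(ltW tau_min0).
rewrite [_ * (m * _)]mulrC => /(lt_le_trans mu_max_large).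
by rewrite ltr_pdivrMr ?subr_gt0 // => /ltW.
Qed.

Theorem mainTheorem4
  (R : realType) (n : nat)
  (Omega : set 'cV[R]_n) (f : 'cV[R]_n -> R) (g : 'cV[R]_n -> \bar R) (L : R)
  (M : nat) (alpha beta tau_min mu_min mu_max gamma_dec gamma_inc mu0 C : R)
  (H : nat -> 'M[R]_n) (X Xh : nat -> 'cV[R]_n) (mu t : nat -> R) :
  (* Omega open and convex; f convex, differentiable, L-Lipschitz gradient *)
  open Omega -> convex_set Omega ->
  convex_fun_on Omega f ->
  (forall x, Omega x -> differentiable f x) ->
  0 <= L ->
  (forall x y, Omega x -> Omega y ->
     enorm (gradient f x - gradient f y) <= L * enorm (x - y)) ->
  (* g convex with closed sublevel sets *)
  convex_efun g ->
  (forall c : R, closed [set x | (g x <= c%:E)%E]) ->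
  (* h = f + g has compact sublevel sets and finite infimum *)
  (forall c : R, compact [set x | (hfun Omega f g x <= c%:E)%E]) ->
  (ereal_inf [set hfun Omega f g x | x in setT] < +oo)%E ->
  (* parameters *)
  (1 <= M)%N -> 0 < alpha < 1 -> 0 < beta < 1 -> 0 < tau_min ->
  0 < mu_min -> mu_min <= mu_max -> 0 < gamma_dec < 1 -> 1 < gamma_inc ->
  mu_min <= mu0 <= mu_max ->
  mu_max * tau_min > 2 * L / (1 - alpha) ->
  (* the matrices H_k: symmetric PSD with spectral norm <= C *)
  (forall k, (H k)^T = H k) ->
  (forall k v, 0 <= quadf (H k) v) ->
  (forall k v, enorm (H k *m v) <= C * enorm v) ->
  (* the OSMM iteration *)
  Omega (X 0%N) ->
  mu 0%N = mu0 ->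
  (forall k,
     let lam := mu k * (\tr (H k) / n%:R + tau_min) in
     let P := H k + lam%:M in
     let model y := ((lmodel M f X k y + quadf P (y - X k) / 2)%:E + g y)%E in
     let v := Xh k - X k in
     let phi s := (fext Omega f (X k + s *: v) + s%:E * g (Xh k)
                   + (1 - s)%:E * g (X k))%E in
     let armijo s := (phi s <= hfun Omega f g (X k)
                        - (alpha * s / 2 * quadf P v)%:E)%E in
     [/\ (forall y, (model (Xh k) <= model y)%E),
         (exists j : nat, t k = beta ^+ j /\ armijo (beta ^+ j) /\
            forall j' : nat, (j' < j)%N -> ~ armijo (beta ^+ j')),
         X k.+1 = X k + t k *: v &
         mu k.+1 = (if t k == 1 then Num.max (gamma_dec * mu k) mu_min
                    else Num.min (gamma_inc * mu k) mu_max)]) ->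
  forall k0 : nat, exists k : nat, (k0 <= k)%N /\ t k = 1.
Proof.
move=> Omega_open _ f_convex f_diff _ grad_lipschitz g_convex _ h_compact _ M1
  /andP[_ alpha1] _ tau_min0 mu_min0 mu_minmax _ gamma_inc1 /andP[mu0_ge _]
  mu_max_large _ H_psd _ _ mu0E osmm k0.
pose lam k := mu k * (\tr (H k) / n%:R + tau_min).
pose armijo1 k := armijo Omega f g alpha (H k + (lam k)%:M) (X k) (Xh k) 1.
have unit_step k : armijo1 k -> t k = 1.
  by case: (osmm k) => _ /(backtracking_unit_step (P := armijo Omega f g alpha _ _ _)).
have [[y gy]|g_finite] := pselect (exists y, g y = -oo%E).
  by exists k0; split=> //; apply/unit_step/(armijo1_Ny Omega f g_convex gy).
have {}g_gtNy y : g y != -oo%E by apply/eqP => gy; apply: g_finite; exists y.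
apply: contrapT => no_unit.
have t_ne1 k : (k0 <= k)%N -> t k != 1.
  by move=> k0k; apply/eqP => tk; apply: no_unit; exists k.
have dom i : (k0 <= i)%N -> Omega (X i) /\ exists gx, g (X i) = gx%:E.
  by move=> /t_ne1 /eqP t_ne1i; apply: (not_armijo1_dom g_gtNy) => /unit_step.
rewrite -mu0E in mu0_ge.
have [N mu_capped] := damping_eventually_max mu_min0 mu_minmax gamma_inc1 mu0_ge
  (fun k => let: And4 _ _ _ mu_step := osmm k in mu_step) t_ne1.
pose k := (k0 + (N + M))%N.
have [_ [gx gxE]] := dom k (leq_addr _ _).
apply/(negP (t_ne1 k (leq_addr _ _)))/eqP/unit_step.
apply: (armijo1_of_model_min g_convex g_gtNy Omega_open f_convex f_diff grad_lipschitz
  h_compact M1 _ gxE _ (H_psd k) (ltW alpha1)).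
- by move=> i /andP[ki _]; apply: (proj1 (dom i _)); rewrite /k in ki; lia.
- by case: (osmm k).
apply: two_lipschitz_le_damping mu_max_large => //.
  exact: le_trans (ltW mu_min0) mu_minmax.
exact: mu_capped (leq_addr _ _).
Qed.
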